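(* Let $H>0$ and $R\in(0,\pi)$. For $0\le h\le H$ and $0\le\theta_0\le R$ let $u_{h,\theta_0}$ be the rotationally symmetric function on the cap $\Omega_R=\{\Psi(\theta,\phi):0\le\theta\le R\}$ given by $$u_{h,\theta_0}(\theta)=\begin{cases}h,&\theta\in[0,\theta_0],\\ \frac{h}{R-\theta_0}(R-\theta),&\theta\in(\theta_0,R],\end{cases}$$ (with $u_{h,R}\equiv h$). Then the function $(h,\theta_0)\mapsto R_1[u_{h,\theta_0}]$ on $[0,H]\times[0,R]$ attains its minimum at a unique point, namely $(H,\theta_0^* )$, where $\theta_0^*$ is the unique solution in $(0,R)$ of $$\sin\theta_0\,\big(H^2+(R-\theta_0)^2\big)=2(R-\theta_0)(\cos\theta_0-\cos R).$$ Explicitly, $R_1[u_{h,\theta_0}]=2\pi\Big[1-\cos\theta_0+\frac{(R-\theta_0)^2(\cos\theta_0-\cos R)}{(R-\theta_0)^2+h^2}\Big]$.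
   Context: Spherical coordinates $\Psi(\theta,\phi)=(\sin\theta\cos\phi,\sin\theta\sin\phi,\cos\theta)$ on $\mathbb{S}^2$. For $u$ on a domain $\Omega\subset\mathbb{S}^2$, $R_1[u]=\int_\Omega\frac{1}{1+|\nabla_{\mathbb{S}^2}u|^2}d\Omega$; for rotationally symmetric $u=u(\theta)$ on $\Omega_R$ this equals $2\pi\int_0^R\frac{\sin\theta}{1+u'(\theta)^2}d\theta$. The graphs of the $u_{h,\theta_0}$ are called radial frustum cones. *)

From Stdlib Require Import Reals.
From Coquelicot Require Import Coquelicot.
Open Scope R_scope.

Definition u_frustum (Rc h theta0 : R) (theta : R) : R :=
  if Rle_dec theta theta0 then h else h / (Rc - theta0) * (Rc - theta).

(* R_1 for a rotationally symmetric u = u(theta) on the cap Omega_R: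
   R_1[u] = 2 pi \int_0^R sin(theta) / (1 + u'(theta)^2) d theta. *)
Definition R1_rot (Rc : R) (u : R -> R) : R :=
  2 * PI * RInt (fun theta => sin theta / (1 + (Derive u theta) ^ 2)) 0 Rc.

Definition theta_star_eq (H Rc t : R) : Prop :=
  sin t * (H ^ 2 + (Rc - t) ^ 2) = 2 * (Rc - t) * (cos t - cos Rc).

(* With D := (R - theta0)^2 + h^2, the profile has slope 0 on [0, theta0] and
   slope -h/(R - theta0) beyond, so integrating sin against the two constant
   weights gives R_1 = 2 pi F(h, theta0) with
   F = 1 - cos theta0 + (R - theta0)^2 (cos theta0 - cos R) / D.
   F decreases in h, strictly unless theta0 = R, so h = H is forced.  For fixed
   h = H one computes dF/dtheta0 = H^2 phi / D^2 with
   phi(t) = sin t (H^2 + (R - t)^2) - 2 (R - t)(cos t - cos R) = sin t * psi(t),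
   and psi is strictly increasing on (0, R) because
   psi' = 2 (cos t - cos R)(sin t + (R - t) cos t) / sin^2 t > 0.  As
   phi(0) < 0 < phi(R), phi has exactly one root theta0^* in (0, R), where F
   changes from decreasing to increasing. *)
From Stdlib Require Import Reals Psatz.
From Coquelicot Require Import Coquelicot.
Open Scope R_scope.

Lemma is_derive_pos_lt (f df : R -> R) a b : a < b ->
  (forall x, a <= x <= b -> is_derive f x (df x)) ->
  (forall x, a < x < b -> 0 < df x) -> f a < f b.
Proof.
  intros Hab Hd Hpos.
  destruct (MVT_cor2 f df a b Hab) as [c [Hfc Hc]].
  { intros c Hc. apply is_derive_Reals, Hd, Hc. }
  specialize (Hpos c Hc). nra.
Qed.

Lemma is_derive_neg_lt (f df : R -> R) a b : a < b ->
  (forall x, a <= x <= b -> is_derive f x (df x)) ->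
  (forall x, a < x < b -> df x < 0) -> f b < f a.
Proof.
  intros Hab Hd Hneg. apply Ropp_lt_cancel.
  apply (is_derive_pos_lt (fun x => - f x) (fun x => - df x) a b Hab).
  - intros x Hx. apply (is_derive_opp f x (df x)), Hd, Hx.
  - intros x Hx. specialize (Hneg x Hx). lra.
Qed.

Lemma is_RInt_scal_sin (k a b : R) :
  is_RInt (fun x => k * sin x) a b (k * (cos a - cos b)).
Proof.
  replace (k * (cos a - cos b)) with (minus (- k * cos b) (- k * cos a))
    by (unfold minus, plus, opp; simpl; ring).
  apply (is_RInt_derive (fun x => - k * cos x)).
  - intros x _. auto_derive; [exact I | ring].
  - intros x _. apply continuity_pt_filterlim, continuity_pt_mult.
    + apply continuity_pt_const. now intros ? ?.
    + apply continuity_sin.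
Qed.

Section FrustumProfile.
Variables (Rc h t0 : R).

Lemma Derive_u_frustum_lt th : th < t0 -> Derive (u_frustum Rc h t0) th = 0.
Proof.
  intros Hth. apply is_derive_unique, is_derive_ext_loc with (fun _ => h).
  - assert (Hgap : 0 < t0 - th) by lra.
    exists (mkposreal _ Hgap). intros y Hy.
    change (Rabs (y - th) < t0 - th) in Hy. apply Rabs_def2 in Hy.
    unfold u_frustum. destruct (Rle_dec y t0); [reflexivity | lra].
  - auto_derive; [exact I | ring].
Qed.

Lemma Derive_u_frustum_gt th :
  t0 < th -> Derive (u_frustum Rc h t0) th = - (h / (Rc - t0)).
Proof.
  intros Hth. apply is_derive_unique.
  apply is_derive_ext_loc with (fun y => h / (Rc - t0) * (Rc - y)).
  - assert (Hgap : 0 < th - t0) by lra.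
    exists (mkposreal _ Hgap). intros y Hy.
    change (Rabs (y - th) < th - t0) in Hy. apply Rabs_def2 in Hy.
    unfold u_frustum. destruct (Rle_dec y t0); [lra | reflexivity].
  - auto_derive; [exact I | ring].
Qed.

End FrustumProfile.

Definition frustum_energy (Rc h t : R) : R :=
  1 - cos t + (Rc - t) ^ 2 * (cos t - cos Rc) / ((Rc - t) ^ 2 + h ^ 2).

Lemma R1_rot_u_frustum Rc h t0 : 0 <= t0 <= Rc ->
  R1_rot Rc (u_frustum Rc h t0) = 2 * PI * frustum_energy Rc h t0.
Proof.
  intros Ht0. unfold R1_rot, frustum_energy. f_equal.
  set (k := / (1 + (- (h / (Rc - t0))) ^ 2)).
  assert (Hint : is_RInt
    (fun th => sin th / (1 + Derive (u_frustum Rc h t0) th ^ 2)) 0 Rc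
    (plus (1 * (cos 0 - cos t0)) (k * (cos t0 - cos Rc)))).
  { apply (is_RInt_Chasles (V := R_NormedModule)) with t0.
    - apply is_RInt_ext with (fun x => 1 * sin x); [| apply is_RInt_scal_sin].
      intros x Hx. rewrite Rmin_left, Rmax_right in Hx by lra.
      rewrite Derive_u_frustum_lt by lra. simpl. field.
    - apply is_RInt_ext with (fun x => k * sin x); [| apply is_RInt_scal_sin].
      intros x Hx. rewrite Rmin_left, Rmax_right in Hx by lra.
      rewrite Derive_u_frustum_gt by lra. unfold k. simpl. field.
      split; [lra |]. nra. }
  rewrite (is_RInt_unique _ _ _ _ Hint). unfold plus; simpl. rewrite cos_0.
  destruct (Req_dec t0 Rc) as [-> | Hne].
  - replace (Rc - Rc) with 0 by ring. unfold Rdiv. simpl. ring.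
  - unfold k. field. split; [| lra]. nra.
Qed.

Lemma cos_sub_cos_pos Rc t : 0 <= t < Rc -> Rc <= PI -> 0 < cos t - cos Rc.
Proof.
  intros Ht HRc. assert (cos Rc < cos t) by (apply cos_decreasing_1; lra). lra.
Qed.

Lemma frustum_energy_le_height Rc h H t :
  0 <= h <= H -> 0 <= t <= Rc -> Rc <= PI ->
  frustum_energy Rc H t <= frustum_energy Rc h t.
Proof.
  intros Hh Ht HRc. unfold frustum_energy.
  destruct (Req_dec t Rc) as [-> | Hne].
  { replace (Rc - Rc) with 0 by ring. unfold Rdiv. simpl. lra. }
  assert (0 < cos t - cos Rc) by (apply cos_sub_cos_pos; lra).
  assert (0 < (Rc - t) ^ 2) by (apply pow_lt; lra).
  unfold Rdiv. apply Rplus_le_compat_l, Rmult_le_compat_l; [nra |].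
  apply Rinv_le_contravar; [nra |]. apply Rplus_le_compat_l, pow_incr; lra.
Qed.

Lemma frustum_energy_lt_height Rc h H t :
  0 <= h < H -> 0 <= t < Rc -> Rc <= PI ->
  frustum_energy Rc H t < frustum_energy Rc h t.
Proof.
  intros Hh Ht HRc. unfold frustum_energy.
  assert (0 < cos t - cos Rc) by (apply cos_sub_cos_pos; lra).
  assert (0 < (Rc - t) ^ 2) by (apply pow_lt; lra).
  unfold Rdiv. apply Rplus_lt_compat_l, Rmult_lt_compat_l; [nra |].
  apply Rinv_lt_contravar; [nra |]. apply Rplus_lt_compat_l. simpl. nra.
Qed.

Definition star_residual (H Rc t : R) : R :=
  sin t * (H ^ 2 + (Rc - t) ^ 2) - 2 * (Rc - t) * (cos t - cos Rc).

Definition star_residual_div_sin (H Rc t : R) : R :=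
  H ^ 2 + (Rc - t) ^ 2 - 2 * (Rc - t) * (cos t - cos Rc) / sin t.

Lemma theta_star_eqE H Rc t : theta_star_eq H Rc t <-> star_residual H Rc t = 0.
Proof. unfold theta_star_eq, star_residual. lra. Qed.

Lemma star_residual_eq_mul H Rc t : sin t <> 0 ->
  star_residual H Rc t = sin t * star_residual_div_sin H Rc t.
Proof. intros Hsin. unfold star_residual, star_residual_div_sin. field. exact Hsin. Qed.

Lemma is_derive_frustum_energy H Rc t : 0 < H ->
  is_derive (frustum_energy Rc H) t
    (H ^ 2 * star_residual H Rc t / ((Rc - t) ^ 2 + H ^ 2) ^ 2).
Proof.
  intros HH. assert (0 < (Rc - t) ^ 2 + H ^ 2)
    by (assert (0 < H ^ 2) by (apply pow_lt; lra); assert (0 <= (Rc - t) ^ 2) by apply pow2_ge_0; lra).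
  unfold frustum_energy, star_residual. auto_derive; [lra | field; lra].
Qed.

Section StarRoot.
Variables (H Rc : R).
Hypotheses (HH : 0 < H) (HR0 : 0 < Rc) (HRpi : Rc < PI).

Lemma sin_add_mul_cos_pos t : 0 < t < Rc -> 0 < sin t + (Rc - t) * cos t.
Proof.
  intros Ht.
  assert (Hlt : sin Rc + (Rc - Rc) * cos Rc < sin t + (Rc - t) * cos t).
  { apply (is_derive_neg_lt (fun s => sin s + (Rc - s) * cos s)
                            (fun s => - ((Rc - s) * sin s))); [lra | |].
    - intros s _. auto_derive; [exact I | ring].
    - intros s Hs. assert (0 < sin s) by (apply sin_gt_0; lra). nra. }
  assert (0 < sin Rc) by (apply sin_gt_0; lra). lra.
Qed.

Lemma star_residual_div_sin_lt s t : 0 < s -> s < t -> t < Rc ->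
  star_residual_div_sin H Rc s < star_residual_div_sin H Rc t.
Proof.
  intros Hs Hst Ht.
  apply (is_derive_pos_lt _
    (fun x => 2 * (cos x - cos Rc) * (sin x + (Rc - x) * cos x) / sin x ^ 2));
    [lra | |].
  - intros x Hx. assert (0 < sin x) by (apply sin_gt_0; lra).
    unfold star_residual_div_sin. auto_derive; [lra | field; lra].
  - intros x Hx.
    assert (0 < sin x) by (apply sin_gt_0; lra).
    assert (0 < cos x - cos Rc) by (apply cos_sub_cos_pos; lra).
    assert (0 < sin x + (Rc - x) * cos x) by (apply sin_add_mul_cos_pos; lra).
    apply Rdiv_lt_0_compat; [nra | apply pow_lt; lra].
Qed.

Lemma star_residual_sign s t : 0 < s < Rc -> 0 < t < Rc ->
  star_residual H Rc s = 0 ->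
  (t < s -> star_residual H Rc t < 0) /\ (s < t -> 0 < star_residual H Rc t).
Proof.
  intros Hs Ht Hroot.
  assert (0 < sin s) by (apply sin_gt_0; lra). assert (0 < sin t) by (apply sin_gt_0; lra).
  rewrite star_residual_eq_mul in Hroot by lra.
  rewrite star_residual_eq_mul by lra.
  assert (Hpsi : star_residual_div_sin H Rc s = 0).
  { destruct (Rmult_integral _ _ Hroot); [lra | assumption]. }
  split; intros Hlt.
  - assert (star_residual_div_sin H Rc t < star_residual_div_sin H Rc s)
      by (apply star_residual_div_sin_lt; lra). nra.
  - assert (star_residual_div_sin H Rc s < star_residual_div_sin H Rc t)
      by (apply star_residual_div_sin_lt; lra). nra.
Qed.

Lemma star_residual_root_unique s t : 0 < s < Rc -> 0 < t < Rc ->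
  star_residual H Rc s = 0 -> star_residual H Rc t = 0 -> t = s.
Proof.
  intros Hs Ht Hroot_s Hroot_t.
  destruct (star_residual_sign s t Hs Ht Hroot_s) as [Hbefore Hafter].
  destruct (Rtotal_order t s) as [Hlt | [Heq | Hgt]]; [| exact Heq |].
  - specialize (Hbefore Hlt). lra.
  - specialize (Hafter Hgt). lra.
Qed.

Lemma star_residual_root_exists : exists s, 0 < s < Rc /\ star_residual H Rc s = 0.
Proof.
  assert (Hcont : continuity (star_residual H Rc)).
  { intros x. apply continuity_pt_filterlim, (ex_derive_continuous (V := R_NormedModule)).
    unfold star_residual. auto_derive. exact I. }
  assert (H0 : star_residual H Rc 0 < 0).
  { unfold star_residual. rewrite sin_0, cos_0.
    assert (cos Rc < 1) by (rewrite <- cos_0; apply cos_decreasing_1; lra). nra. }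
  assert (HRc : 0 < star_residual H Rc Rc).
  { unfold star_residual. replace (Rc - Rc) with 0 by ring.
    assert (0 < sin Rc) by (apply sin_gt_0; lra).
    assert (0 < H ^ 2) by (apply pow_lt; lra). nra. }
  destruct (IVT _ 0 Rc Hcont HR0 H0 HRc) as [s [Hs Hroot]].
  exists s. split; [| exact Hroot].
  split; apply Rnot_le_lt; intros Hle.
  - replace s with 0 in Hroot by lra. lra.
  - replace s with Rc in Hroot by lra. lra.
Qed.

Lemma frustum_energy_root_lt s t : 0 < s < Rc -> star_residual H Rc s = 0 ->
  0 <= t <= Rc -> t <> s -> frustum_energy Rc H s < frustum_energy Rc H t.
Proof.
  intros Hs Hroot Ht Hne.
  pose (df x := H ^ 2 * star_residual H Rc x / ((Rc - x) ^ 2 + H ^ 2) ^ 2).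
  assert (Hdf : forall x,
            df x = H ^ 2 / ((Rc - x) ^ 2 + H ^ 2) ^ 2 * star_residual H Rc x)
    by (intros x; unfold df, Rdiv; ring).
  assert (Hfactor : forall x, 0 < H ^ 2 / ((Rc - x) ^ 2 + H ^ 2) ^ 2).
  { intros x. assert (0 < H ^ 2) by (apply pow_lt; lra).
    assert (0 <= (Rc - x) ^ 2) by apply pow2_ge_0.
    apply Rdiv_lt_0_compat; [lra | apply pow_lt; lra]. }
  destruct (Rtotal_order t s) as [Hlt | [Heq | Hgt]]; [| lra |].
  - apply (is_derive_neg_lt _ df t s Hlt); [intros x _; apply is_derive_frustum_energy, HH |].
    intros x Hx. rewrite Hdf.
    destruct (star_residual_sign s x Hs ltac:(lra) Hroot) as [Hneg _].
    specialize (Hneg ltac:(lra)). specialize (Hfactor x). nra.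
  - apply (is_derive_pos_lt _ df s t Hgt); [intros x _; apply is_derive_frustum_energy, HH |].
    intros x Hx. rewrite Hdf.
    destruct (star_residual_sign s x Hs ltac:(lra) Hroot) as [_ Hpos].
    specialize (Hpos ltac:(lra)). specialize (Hfactor x). nra.
Qed.

End StarRoot.

Theorem mainTheorem4 (H Rc : R) (HH : 0 < H) (HR0 : 0 < Rc) (HRpi : Rc < PI) :
  (forall h t0, 0 <= h <= H -> 0 <= t0 <= Rc ->
     R1_rot Rc (u_frustum Rc h t0) =
     2 * PI * (1 - cos t0 + (Rc - t0) ^ 2 * (cos t0 - cos Rc) / ((Rc - t0) ^ 2 + h ^ 2)))
  /\
  exists t0s : R,
    (0 < t0s < Rc /\ theta_star_eq H Rc t0s /\
     forall t, 0 < t < Rc -> theta_star_eq H Rc t -> t = t0s) /\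
    (forall h t0, 0 <= h <= H -> 0 <= t0 <= Rc ->
       R1_rot Rc (u_frustum Rc H t0s) <= R1_rot Rc (u_frustum Rc h t0)) /\
    (forall h t0, 0 <= h <= H -> 0 <= t0 <= Rc ->
       R1_rot Rc (u_frustum Rc h t0) = R1_rot Rc (u_frustum Rc H t0s) ->
       h = H /\ t0 = t0s).
Proof.
  split; [intros h t0 _ Ht0; exact (R1_rot_u_frustum Rc h t0 Ht0) |].
  destruct (star_residual_root_exists H Rc HH HR0 HRpi) as [s [Hs Hroot]].
  pose proof PI_RGT_0 as HPI.
  assert (Hmin : forall h t0, 0 <= h <= H -> 0 <= t0 <= Rc -> t0 <> s ->
            frustum_energy Rc H s < frustum_energy Rc h t0).
  { intros h t0 Hh Ht0 Hne.
    apply Rlt_le_trans with (frustum_energy Rc H t0).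
    - exact (frustum_energy_root_lt H Rc HH HR0 HRpi s t0 Hs Hroot Ht0 Hne).
    - apply frustum_energy_le_height; lra. }
  exists s. split; [| split].
  - split; [exact Hs | split; [apply theta_star_eqE, Hroot |]].
    intros t Ht Heq%theta_star_eqE.
    exact (star_residual_root_unique H Rc HR0 HRpi s t Hs Ht Hroot Heq).
  - intros h t0 Hh Ht0. rewrite !R1_rot_u_frustum by lra.
    destruct (Req_dec t0 s) as [-> | Hne].
    + apply Rmult_le_compat_l, frustum_energy_le_height; lra.
    + specialize (Hmin h t0 Hh Ht0 Hne). nra.
  - intros h t0 Hh Ht0 Heq. rewrite !R1_rot_u_frustum in Heq by lra.
    apply Rmult_eq_reg_l in Heq; [| lra].
    destruct (Req_dec t0 s) as [-> | Hne]; [| specialize (Hmin h t0 Hh Ht0 Hne); lra].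
    split; [| reflexivity].
    destruct (Req_dec h H) as [? | Hh']; [assumption |].
    pose proof (frustum_energy_lt_height Rc h H s ltac:(lra) ltac:(lra) ltac:(lra)). lra.
Qed.
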